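(* Let $0<\beta<1$, $p=\lceil\beta^{-1}\rceil-1$, and let $G$ be a graph of order $n$ with minimum degree $(1-\beta)n$. Then for all integers $2\le t<s\le p+1$ and every $S\in\mathcal{K}_s$, $$\Phi_t^s(S)\ \ge\ (1-t\beta)\frac{s!}{t!}+\big(D_-(S)-(1-s\beta)\big)\frac{(s-2)!}{(t-2)!}.$$ In particular, for $2\le t\le p$, $$\sum_{S\in\mathcal{K}_{p+1}}\Phi_t^{p+1}(S)\ \ge\ \left((1-t\beta)\frac{(p+1)!}{t!}-(1-(p+1)\beta)\frac{(p-1)!}{(t-2)!}\right)k_{p+1}.$$
   Context: All graphs are finite and simple. For a graph $G$, $\mathcal{K}_t$ is the set of $t$-cliques (identified with vertex sets), $k_t=|\mathcal{K}_t|$, and $\mathcal{K}_t(S)$ is the set of $t$-cliques contained in a clique $S$. The degree $d(T)$ of a clique $T$ is the number of cliques with one more vertex containing $T$, and $D(T)=d(T)/n$. With $p=\lceil\beta^{-1}\rceil-1$, for $T\in\mathcal{K}_t$, $1\le t\le p+1$, $D_-(T)=\min\{D(T),(p-t+1)\beta\}$. For integers $2\le t\le s\le p+1$ define $\phi_t^s:\mathcal{K}_s\to\mathbb{R}$ recursively by $\phi_t^t(S)=D_-(S)$ and $\phi_t^s(S)=\sum_{U\in\mathcal{K}_{s-1}(S)}\phi_t^{s-1}(U)$ for $s>t$; set $\varphi_t^s=(1-t\beta)\frac{s!}{t!}+((p+1)\beta-1)\frac{(s-2)!}{(t-2)!}$ and $\Phi_t^s(S)=\min\{\phi_t^s(S),\varphi_t^s\}$.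 *)

From HB Require Import structures.
From mathcomp Require Import all_boot all_order all_algebra.
Set Implicit Arguments. Unset Strict Implicit. Unset Printing Implicit Defensive.
Import Order.TTheory GRing.Theory Num.Theory.
Local Open Scope ring_scope.

Definition simple_graph (T : finType) (e : rel T) : Prop :=
  symmetric e /\ irreflexive e.

Definition is_clique (T : finType) (e : rel T) (S : {set T}) : bool :=
  [forall x in S, forall y in S, (x != y) ==> e x y].

Definition cliques (T : finType) (e : rel T) (t : nat) : {set {set T}} :=
  [set S : {set T} | is_clique e S && (#|S| == t)%N].

Definition cliques_in (T : finType) (e : rel T) (t : nat) (S : {set T})
  : {set {set T}} := [set U in cliques e t | U \subset S].

Definition vdeg (T : finType) (e : rel T) (v : T) : nat := #|[set w | e v w]|.

Definition cdeg (T : finType) (e : rel T) (S : {set T}) : nat :=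
  #|[set U in cliques e (#|S|.+1) | S \subset U]|.

Definition Dn (R : realFieldType) (T : finType) (e : rel T) (S : {set T}) : R :=
  (cdeg e S)%:R / (#|T|)%:R.

Definition Dminus (R : realFieldType) (T : finType) (e : rel T)
  (beta : R) (p : nat) (S : {set T}) : R :=
  Num.min (Dn R e S) ((p%:R - (#|S|)%:R + 1) * beta).

(* phi_rec t k S = phi_t^{t+k}(S) *)
Fixpoint phi_rec (R : realFieldType) (T : finType) (e : rel T)
  (beta : R) (p t k : nat) (S : {set T}) : R :=
  match k with
  | 0 => Dminus e beta p S
  | k'.+1 => \sum_(U in cliques_in e (t + k') S) phi_rec e beta p t k' U
  end.

Definition phi (R : realFieldType) (T : finType) (e : rel T)
  (beta : R) (p t s : nat) (S : {set T}) : R :=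
  phi_rec e beta p t (s - t) S.

Definition varphi (R : realFieldType) (beta : R) (p t s : nat) : R :=
  (1 - t%:R * beta) * ((s`!)%:R / (t`!)%:R)
  + ((p.+1)%:R * beta - 1) * (((s - 2)`!)%:R / ((t - 2)`!)%:R).

Definition Phi (R : realFieldType) (T : finType) (e : rel T)
  (beta : R) (p t s : nat) (S : {set T}) : R :=
  Num.min (phi e beta p t s S) (varphi beta p t s).

From HB Require Import structures.
From mathcomp Require Import all_boot all_order all_algebra.
From mathcomp Require Import ring lra zify.
Set Implicit Arguments. Unset Strict Implicit. Unset Printing Implicit Defensive.
Import Order.TTheory GRing.Theory Num.Theory.

(* For a clique S, d(S) is the size of the common neighbourhood N(S) of S.
   Counting, for each vertex w, the v in S that are not adjacent to w, and
   using that every vertex has at most beta n non-neighbours, gives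
   D(S) >= 1 - |S| beta, D(S - v) <= D(S) + beta and
   sum_v D(S - v) >= (|S| - 2) D(S) + 2 - |S| beta.
   The last inequality survives the truncation D |-> D_- because
   (p + 1) beta >= 1.  Since phi_t^(s+1)(S) = sum_v phi_t^s(S - v), induction
   on s turns it into the affine lower bound of the theorem; the cap
   varphi_t^s only needs D_-(S) <= (p - s + 1) beta, and D_- vanishes on
   (p + 1)-cliques, which gives the summed form. *)

Section CommonNeighbourhood.
Variables (T : finType) (e : rel T).
Implicit Types (S U : {set T}) (v w : T).

Definition common_nbh S := [set w | [forall x in S, e x w]].
Definition non_nbh v := [set w | ~~ e v w].

Lemma common_nbhP S w : reflect {in S, forall x, e x w} (w \in common_nbh S).
Proof. by rewrite inE; apply: (iffP forall_inP). Qed.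

Lemma cliqueP S :
  reflect {in S &, forall x y, x != y -> e x y} (is_clique e S).
Proof.
apply: (iffP forall_inP) => [cS x y xS yS | cS x xS].
  by have /forall_inP/(_ y yS)/implyP := cS x xS.
by apply/forall_inP => y yS; apply/implyP; apply: cS.
Qed.

Lemma clique_subset S U : U \subset S -> is_clique e S -> is_clique e U.
Proof.
by move=> /subsetP sUS /cliqueP cS; apply/cliqueP => x y xU yU; apply: cS; apply: sUS.
Qed.

Lemma clique_setD1 S v : is_clique e S -> is_clique e (S :\ v).
Proof. exact/clique_subset/subsetDl. Qed.

Lemma card_setD_eq1 S U k :
  U \subset S -> #|S| = k.+1 -> #|U| = k -> exists2 v, v \in S & U = S :\ v.
Proof.
move=> sUS cS cU; have /cards1P [v Dv] : #|S :\: U| == 1%N.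
  by rewrite cardsD (setIidPr sUS) cS cU subSn // subnn.
have : v \in S :\: U by rewrite Dv set11.
rewrite inE => /andP [vU vS].
exists v => //; apply/setP => w; rewrite !inE.
case: (eqVneq w v) => [-> | wv] /=; first by rewrite (negbTE vU).
apply/idP/idP => [wU | wS]; first exact: (subsetP sUS).
apply: contraT => wU; have : w \in S :\: U by rewrite inE wU.
by rewrite Dv inE (negbTE wv).
Qed.

Lemma cliques_in_setD1 S k :
  is_clique e S -> #|S| = k.+1 -> cliques_in e k S = [set S :\ v | v in S].
Proof.
move=> cS cardS; apply/setP => U; rewrite !inE; apply/andP/imsetP.
  case=> /andP [_ /eqP cardU] sUS; exact: card_setD_eq1 sUS cardS cardU.
case=> v vS ->; rewrite clique_setD1 // subsetDl; split=> //=.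
by move: cardS; rewrite (cardsD1 v S) vS add1n => -[->].
Qed.

Lemma sum_cliques_in_setD1 (R : nmodType) S k (F : {set T} -> R) :
  is_clique e S -> #|S| = k.+1 ->
  (\sum_(U in cliques_in e k S) F U = \sum_(v in S) F (S :\ v))%R.
Proof.
move=> cS cardS; rewrite cliques_in_setD1 // big_imset // => v w vS wS eqSvw.
apply: contraTeq vS => vw; have : v \notin S :\ w by rewrite -eqSvw setD11.
by rewrite !inE vw.
Qed.

Lemma sum_mem_card (A : {set T}) : \sum_w (w \in A) = #|A|.
Proof. by rewrite -sum1_card [RHS]big_mkcond; apply: eq_bigr => w _; case: (w \in A). Qed.

Lemma sum_card_exchange S (X : T -> {set T}) :
  \sum_(v in S) #|X v| = \sum_w \sum_(v in S) (w \in X v).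
Proof. by rewrite exchange_big; apply: eq_bigr => v _; rewrite sum_mem_card. Qed.

Lemma common_nbhN S w :
  w \notin common_nbh S -> exists2 v, v \in S & w \in non_nbh v.
Proof. by rewrite inE negb_forall_in => /exists_inP [v vS evw]; exists v; rewrite ?inE. Qed.

Lemma card_common_nbh_ge U : #|T| <= #|common_nbh U| + \sum_(u in U) #|non_nbh u|.
Proof.
rewrite sum_card_exchange -sum_mem_card -sum1_card -big_split /=.
apply: leq_sum => w _; case: (boolP (w \in common_nbh U)) => // /common_nbhN [u uU wu].
by rewrite (bigD1 u) //= wu.
Qed.

Lemma common_nbh_setD1 S v :
  common_nbh (S :\ v) \subset common_nbh S :|: non_nbh v.
Proof.
apply/subsetP => w /common_nbhP wN; rewrite !inE orbC.
case: (boolP (e v w)) => //= evw; apply/forall_inP => x xS.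
by case: (eqVneq x v) => [-> // | xv]; apply: wN; rewrite !inE xv.
Qed.

Lemma card_common_nbh_setD1 S v :
  #|common_nbh (S :\ v)| <= #|common_nbh S| + #|non_nbh v|.
Proof. exact: leq_trans (subset_leq_card (common_nbh_setD1 S v)) (leq_card_setU _ _). Qed.

Lemma common_nbh_setD1_count S w : 2 <= #|S| ->
  (#|S| - 2) * (w \in common_nbh S) + 2 <=
  \sum_(v in S) (w \in common_nbh (S :\ v)) + \sum_(v in S) (w \in non_nbh v).
Proof.
move=> S2; case: (boolP (w \in common_nbh S)) => [wN | /common_nbhN [u uS wu]].
  have wNv v : w \in common_nbh (S :\ v).
    by move/common_nbhP: wN => wN; apply/common_nbhP => y /setD1P [_ /wN].
  rewrite muln1 (eq_bigr (fun=> 1%N)) => [|v _]; last by rewrite wNv.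
  by rewrite sum1_card subnK // leq_addr.
rewrite muln0 add0n; set B := [set v in S | w \in non_nbh v].
have -> : \sum_(v in S) (w \in non_nbh v) = #|B|.
  rewrite (eq_bigr (fun v => if w \in non_nbh v then 1 else 0)%N) => [|v _].
    by rewrite -big_mkcondr sum1dep_card.
  by case: (_ \in _).
have : u \in B by rewrite inE uS.
case: (ltnP 1 #|B|) => [B2 _ | B1 uB]; first exact: leq_trans B2 (leq_addl _ _).
have DB : B = [set u] by apply/eqP; rewrite eq_sym eqEcard sub1set uB cards1.
rewrite DB cards1 addn1 ltnS (bigD1 u) //= -[1%N]addn0 leq_add //.
rewrite lt0b; apply/common_nbhP => x /setD1P [xu xS]; apply: contraT => exw.
have : x \in B by rewrite !inE xS exw.
by rewrite DB inE (negbTE xu).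
Qed.

Lemma card_common_nbh_setD1_ge S : 2 <= #|S| ->
  (#|S| - 2) * #|common_nbh S| + 2 * #|T| <=
  \sum_(v in S) #|common_nbh (S :\ v)| + \sum_(v in S) #|non_nbh v|.
Proof.
move=> S2; rewrite !sum_card_exchange -big_split -(sum_mem_card (common_nbh S)).
rewrite -[#|T|]sum1_card !big_distrr -big_split /=.
by apply: leq_sum => w _; rewrite muln1 common_nbh_setD1_count.
Qed.

Hypotheses (e_sym : symmetric e) (e_irr : irreflexive e).

Lemma cdeg_clique S : is_clique e S -> cdeg e S = #|common_nbh S|.
Proof.
move=> cS; rewrite /cdeg; have wS w : w \in common_nbh S -> w \notin S.
  by move/common_nbhP=> wN; apply/negP => /wN; rewrite e_irr.
have -> : [set U in cliques e #|S|.+1 | S \subset U]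
          = [set w |: S | w in common_nbh S].
  apply/setP => U; rewrite !inE; apply/andP/imsetP.
    case=> /andP [cU /eqP cardU] sSU.
    have [w wU DS] := card_setD_eq1 sSU cardU erefl.
    exists w; last by rewrite DS setD1K.
    apply/common_nbhP => x xS; have := xS; rewrite DS !inE => /andP [xw xU].
    by move/cliqueP: cU; apply.
  case=> w wN ->; split; last exact: subsetUr.
  rewrite cardsU1 wS // eqxx andbT.
  move/common_nbhP: wN => wN; apply/cliqueP => x y.
  rewrite !inE => /orP [/eqP -> | xS] /orP [/eqP -> | yS]; rewrite ?eqxx //.
  - by rewrite e_sym => _; apply: wN.
  - by move=> _; apply: wN.
  - by move/cliqueP: cS; apply.
rewrite card_in_imset // => w w' wN w'N /setP/(_ w).
rewrite !inE eqxx /= => /esym/orP [/eqP // |].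
by move/negP: (wS w wN).
Qed.

End CommonNeighbourhood.

Local Open Scope ring_scope.

Lemma sum_min_ge (R : realFieldType) (I : finType) (A : {set I}) (f : I -> R)
    (d b c : R) :
  let k := #|A|%:R in let l := 1 - (k - 1) * b in
  (2 <= #|A|)%N ->
  {in A, forall i, f i <= d + b} -> {in A, forall i, l <= f i} -> l <= c ->
  (k - 2) * d + 2 - k * b <= \sum_(i in A) f i ->
  (k - 2) * Num.min d (c - b) + 2 - k * b <= \sum_(i in A) Num.min (f i) c.
Proof.
move=> k l A2 fA_le fA_ge lc sumA.
set B := [set i | c < f i]; set x := Num.min d (c - b).
have xd : x <= d by rewrite ge_min lexx.
have xc : x <= c - b by rewrite ge_min lexx orbT.
have kE : k = #|A :&: B|%:R + #|A :\: B|%:R by rewrite -natrD cardsID.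
have k2 : 2 <= k by rewrite ler_nat.
rewrite (big_setID B) /= -/B in sumA; rewrite (big_setID B) /= -/B.
have -> : \sum_(i in A :&: B) Num.min (f i) c = c *+ #|A :&: B|.
  by rewrite -sumr_const; apply: eq_bigr => i /setIP [_]; rewrite inE => /ltW/min_r.
have -> : \sum_(i in A :\: B) Num.min (f i) c = \sum_(i in A :\: B) f i.
  by apply: eq_bigr => i /setDP [_]; rewrite inE -leNgt => /min_l.
set a := #|A :&: B|%:R in kE *; set a' := #|A :\: B|%:R in kE.
(* Either at most k - 2 values are capped, each losing at most d + b, or at
   most one value is left uncapped, and it is at least l. *)
case: (leqP #|A :&: B| (#|A| - 2)) => [aA | aA].
- have ak : a <= k - 2 by rewrite /a /k -natrB // ler_nat.
  have : \sum_(i in A :&: B) f i <= (d + b) *+ #|A :&: B|.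
    by rewrite -sumr_const; apply: ler_sum => i /setIP [iA _]; apply: fA_le.
  have : 0 <= a * (c - b - x) by rewrite mulr_ge0 ?subr_ge0.
  have : 0 <= (k - 2 - a) * (d - x) by apply: mulr_ge0; rewrite subr_ge0.
  rewrite -[c *+ _]mulr_natr -[(d + b) *+ _]mulr_natr -/a; lra.
- have a'1 : a' <= 1.
    by rewrite /a' lern1; have := cardsID B A; lia.
  have : l *+ #|A :\: B| <= \sum_(i in A :\: B) f i.
    by rewrite -sumr_const; apply: ler_sum => i /setDP [iA _]; apply: fA_ge.
  have : 0 <= (2 - a') * (c - l) by rewrite mulr_ge0 ?subr_ge0 //; lra.
  have : (k - 2) * x <= (k - 2) * (c - b) by rewrite ler_wpM2l ?subr_ge0.
  have -> : (k - 2) * x + 2 - k * b = (k - 2) * x - (k - 2) * (c - b) + (k - 2) * c + 2 * l.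
    by rewrite /l; ring.
  rewrite -[c *+ _]mulr_natr -[l *+ _]mulr_natr -/a' kE; lra.
Qed.

Section PhiLowerBound.
Variables (R : realFieldType) (beta : R).

Definition phi_lb (t s : nat) (x : R) : R :=
  (1 - t%:R * beta) * ((s`!)%:R / (t`!)%:R)
  + (x - (1 - s%:R * beta)) * (((s - 2)`!)%:R / ((t - 2)`!)%:R).

Lemma phi_lb_id t x : phi_lb t t x = x.
Proof. by rewrite /phi_lb !divff ?pnatr_eq0 -?lt0n ?fact_gt0 // !mulr1 addrC subrK. Qed.

Lemma phi_lb_sum_ge (I : finType) (A : {set I}) (y : I -> R) (x : R) t s :
  (2 <= t)%N -> (t <= s)%N -> #|A| = s.+1 ->
  (#|A|%:R - 2) * x + 2 - #|A|%:R * beta <= \sum_(i in A) y i ->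
  phi_lb t s.+1 x <= \sum_(i in A) phi_lb t s (y i).
Proof.
move=> t2 ts cardA sum_ge; have s2 : (2 <= s)%N := leq_trans t2 ts.
rewrite /phi_lb; set F := (s`!)%:R / (t`!)%:R; set G := ((s - 2)`!)%:R / ((t - 2)`!)%:R.
have G_ge0 : 0 <= G by rewrite divr_ge0.
have FS : ((s.+1)`!)%:R / (t`!)%:R = (s%:R + 1) * F by rewrite factS natrM -natr1 mulrA.
have GS : ((s.+1 - 2)`!)%:R / ((t - 2)`!)%:R = (s%:R - 1) * G.
  have -> : (s.+1 - 2 = (s - 2).+1)%N by lia.
  rewrite factS natrM -mulrA -/G; have -> : (s - 2).+1 = (s - 1)%N by lia.
  by rewrite natrB // ltnW.
rewrite FS GS big_split /= sumr_const -mulr_suml sumrB sumr_const.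
rewrite -(mulr_natr (_ * F)) -(mulr_natr (1 - _)) cardA -natr1.
rewrite cardA -natr1 in sum_ge; set Y := \sum_(i in A) y i in sum_ge *.
have : 0 <= G * (Y - ((s%:R + 1 - 2) * x + 2 - (s%:R + 1) * beta)).
  by rewrite mulr_ge0 ?subr_ge0.
lra.
Qed.

End PhiLowerBound.

Section CliqueDensity.
Variables (R : realFieldType) (T : finType) (e : rel T) (beta : R) (p : nat).
Hypotheses (e_sym : symmetric e) (e_irr : irreflexive e).
Hypothesis min_deg : forall v, (1 - beta) * #|T|%:R <= (vdeg e v)%:R.
Hypothesis T_gt0 : (0 < #|T|)%N.
Hypothesis p_beta : 1 <= p.+1%:R * beta.
Implicit Types (S : {set T}) (v : T).

Let n : R := #|T|%:R.
Let n_gt0 : 0 < n. Proof. by rewrite ltr0n. Qed.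

Lemma Dn_ge0 S : 0 <= Dn R e S.
Proof. by rewrite /Dn divr_ge0. Qed.

Lemma card_non_nbh_le v : #|non_nbh e v|%:R <= beta * n.
Proof.
have -> : non_nbh e v = ~: [set w | e v w] by apply/setP => w; rewrite !inE.
move/(congr1 (GRing.natmul (1 : R))): (cardsC [set w | e v w]); rewrite natrD -/n.
by have := min_deg v; rewrite /vdeg; lra.
Qed.

Lemma sum_card_non_nbh_le S :
  (\sum_(v in S) #|non_nbh e v|)%:R <= #|S|%:R * (beta * n).
Proof.
rewrite natr_sum mulr_natl -sumr_const.
by apply: ler_sum => v _; apply: card_non_nbh_le.
Qed.

Lemma Dn_clique S : is_clique e S -> Dn R e S = #|common_nbh e S|%:R / n.
Proof. by move=> cS; rewrite /Dn cdeg_clique. Qed.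

Lemma Dn_clique_ge S : is_clique e S -> 1 - #|S|%:R * beta <= Dn R e S.
Proof.
move=> cS; rewrite Dn_clique // ler_pdivlMr //.
have := card_common_nbh_ge e S; rewrite -(ler_nat R) natrD -/n.
have := sum_card_non_nbh_le S; lra.
Qed.

Lemma Dn_setD1_le S v : is_clique e S -> Dn R e (S :\ v) <= Dn R e S + beta.
Proof.
move=> cS; rewrite !Dn_clique ?clique_setD1 // -[beta](mulfK (lt0r_neq0 n_gt0)).
rewrite -mulrDl ler_pM2r ?invr_gt0 //.
have := card_common_nbh_setD1 e S v; rewrite -(ler_nat R) natrD.
have := card_non_nbh_le v; lra.
Qed.

Lemma sum_Dn_setD1_ge S : is_clique e S -> (2 <= #|S|)%N ->
  (#|S|%:R - 2) * Dn R e S + 2 - #|S|%:R * beta <= \sum_(v in S) Dn R e (S :\ v).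
Proof.
move=> cS S2; rewrite (eq_bigr _ (fun v _ => Dn_clique (clique_setD1 v cS))).
rewrite Dn_clique // -mulr_suml ler_pdivlMr // -natr_sum.
have := card_common_nbh_setD1_ge e S2; rewrite -(ler_nat R) !natrD !natrM natrB //.
have := sum_card_non_nbh_le S; rewrite -/n.
set c := #|common_nbh e S|%:R; set k := #|S|%:R.
have -> : ((k - 2) * (c / n) + 2 - k * beta) * n = (k - 2) * c + 2 * n - k * (beta * n).
  by field; rewrite lt0r_neq0.
lra.
Qed.


Lemma Dminus_le S : Dminus e beta p S <= (p%:R - #|S|%:R + 1) * beta.
Proof. by rewrite /Dminus ge_min lexx orbT. Qed.

Lemma Dminus_eq0 S : #|S| = p.+1 -> Dminus e beta p S = 0.
Proof.
move=> cardS; rewrite /Dminus cardS -natr1.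
have -> : p%:R - (p%:R + 1) + 1 = 0 :> R by ring.
by rewrite mul0r min_r // Dn_ge0.
Qed.

Lemma sum_Dminus_setD1_ge S : is_clique e S -> (2 <= #|S|)%N ->
  (#|S|%:R - 2) * Dminus e beta p S + 2 - #|S|%:R * beta
  <= \sum_(v in S) Dminus e beta p (S :\ v).
Proof.
move=> cS S2; set k := #|S|%:R; set c := (p%:R - (k - 1) + 1) * beta.
have cardSv v : v \in S -> #|S :\ v|%:R = k - 1.
  by move=> vS; rewrite /k (cardsD1 v S) vS natrD addrAC subrr add0r.
rewrite (eq_bigr (fun v => Num.min (Dn R e (S :\ v)) c)) => [|v vS]; last first.
  by rewrite /Dminus cardSv.
have -> : Dminus e beta p S = Num.min (Dn R e S) (c - beta).
  by rewrite /Dminus /c; congr Num.min; ring.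
apply: sum_min_ge => //.
- by move=> v _; apply: Dn_setD1_le.
- by move=> v vS; rewrite -/k -(cardSv v vS); apply/Dn_clique_ge/clique_setD1.
- by move: p_beta; rewrite /c -/k -natr1; lra.
- exact: sum_Dn_setD1_ge.
Qed.

Lemma phi_rec_ge t k S : (2 <= t)%N -> S \in cliques e (t + k) ->
  phi_lb beta t (t + k) (Dminus e beta p S) <= phi_rec e beta p t k S.
Proof.
move=> t2; elim: k S => [|k IHk] S; first by rewrite addn0 phi_lb_id.
rewrite inE addnS => /andP [cS /eqP cardS] /=.
have SvK v : v \in S -> S :\ v \in cliques e (t + k).
  move=> vS; rewrite inE clique_setD1 //=.
  by move: cardS; rewrite (cardsD1 v S) vS add1n => -[->].
rewrite (sum_cliques_in_setD1 _ cS cardS).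
apply: le_trans (ler_sum _ (fun v vS => IHk (S :\ v) (SvK v vS))).
apply: (phi_lb_sum_ge t2 (leq_addr _ _) cardS).
by apply: sum_Dminus_setD1_ge; rewrite // cardS; lia.
Qed.

Lemma Phi_ge t s S : (2 <= t <= s)%N -> S \in cliques e s ->
  phi_lb beta t s (Dminus e beta p S) <= Phi e beta p t s S.
Proof.
case/andP=> t2 ts SK; rewrite /Phi le_min; apply/andP; split.
  by rewrite /phi; move: SK; rewrite -{1 2}(subnKC ts); apply: phi_rec_ge.
have := Dminus_le S; move: SK; rewrite inE => /andP [_ /eqP ->].
rewrite /phi_lb /varphi lerD2l => Dm_le; apply: ler_wpM2r; first by rewrite divr_ge0.
by move: Dm_le; rewrite -natr1; lra.
Qed.

Lemma sum_Phi_ge t : (2 <= t <= p.+1)%N ->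
  phi_lb beta t p.+1 0 * #|cliques e p.+1|%:R
  <= \sum_(S in cliques e p.+1) Phi e beta p t p.+1 S.
Proof.
move=> tp; rewrite mulr_natr -sumr_const; apply: ler_sum => S SK.
have /eqP cardS : #|S| == p.+1 by move: SK; rewrite inE => /andP [].
by rewrite -(Dminus_eq0 cardS); apply: Phi_ge.
Qed.

End CliqueDensity.

Lemma ceil_inv_mul_ge1 (R : archiRealFieldType) (b : R) (m : nat) :
  0 < b -> Num.ceil b^-1 = m%:Z -> 1 <= m%:R * b.
Proof.
move=> b_gt0 ceil_m; have := Num.Theory.ceil_ge b^-1; rewrite ceil_m => b_le.
by rewrite -[leLHS](mulVf (lt0r_neq0 b_gt0)) ler_pM2r.
Qed.

Theorem mainTheorem17 (R : archiRealFieldType) (beta : R) (p : nat)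
  (T : finType) (e : rel T) :
  0 < beta -> beta < 1 ->
  (p%:Z = Num.ceil (beta^-1) - 1)%R ->
  simple_graph e ->
  (* minimum degree of G equals (1 - beta) n, n = #|T| *)
  (forall v : T, (1 - beta) * (#|T|)%:R <= (vdeg e v)%:R) ->
  (exists v : T, (vdeg e v)%:R = (1 - beta) * (#|T|)%:R) ->
  (forall t s : nat, (2 <= t)%N -> (t < s)%N -> (s <= p.+1)%N ->
     forall S, S \in cliques e s ->
       (1 - t%:R * beta) * ((s`!)%:R / (t`!)%:R)
       + (Dminus e beta p S - (1 - s%:R * beta))
           * (((s - 2)`!)%:R / ((t - 2)`!)%:R)
       <= Phi e beta p t s S)
  /\
  (forall t : nat, (2 <= t)%N -> (t <= p)%N ->
     ((1 - t%:R * beta) * ((p.+1`!)%:R / (t`!)%:R)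
      - (1 - (p.+1)%:R * beta) * (((p - 1)`!)%:R / ((t - 2)`!)%:R))
     * (#|cliques e p.+1|)%:R
     <= \sum_(S in cliques e p.+1) Phi e beta p t p.+1 S).
Proof.
move=> beta_gt0 _ p_ceil [e_sym e_irr] min_deg [v _].
have T_gt0 : (0 < #|T|)%N by apply/card_gt0P; exists v.
have p_beta : 1 <= p.+1%:R * beta.
  by apply: ceil_inv_mul_ge1; rewrite // -addn1 PoszD p_ceil subrK.
split=> [t s t2 ts _ S SK | t t2 tp].
  by apply: (Phi_ge e_sym e_irr min_deg T_gt0 p_beta _ SK); rewrite t2 ltnW.
have tp1 : (2 <= t <= p.+1)%N by rewrite t2 ltnW.
by have := sum_Phi_ge e_sym e_irr min_deg T_gt0 p_beta tp1; rewrite /phi_lb sub0r mulNr.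
Qed.
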